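(* Let $b\ge0$, $M>0$ and $0\le\alpha<1$. Let $p(z)=1+c_1z+c_2z^2+\cdots$ be analytic in $\mathbb{D}$ with $|c_1|=2b$ and $|c_n|\le2M$ for all $n\ge2$. Put \[r_0=r_0(\alpha)=\frac{2(1-\alpha)}{1-\alpha+2b+\sqrt{(1-\alpha+2b)^2+8(1-\alpha)(M-b)}}.\] Then $|p(z)-1|\le1-\alpha$ for $|z|\le r_0$, and $\operatorname{Re}p(z)>\alpha$ for $|z|<r_0$. These results are sharp: the function $p_0(z)=1-2bz-2M\frac{z^2}{1-z}$ satisfies the hypotheses and $p_0(r_0)=\alpha$, so that $|p_0(r_0)-1|=1-\alpha$.
   Context: $\mathbb{D}=\{z\in\mathbb{C}:|z|<1\}$. *)

From HB Require Import structures.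
From mathcomp Require Import all_boot all_order all_algebra.
From mathcomp Require Import complex.
From mathcomp Require Import all_classical all_reals all_analysis.
Set Implicit Arguments. Unset Strict Implicit. Unset Printing Implicit Defensive.
Import Order.TTheory GRing.Theory Num.Theory.
Local Open Scope ring_scope.
Local Open Scope complex_scope.
Local Open Scope classical_set_scope.

HB.instance Definition _ (R : rcfType) := PseudoPointedMetric.copy R[i] R[i]^o.
HB.instance Definition _ (R : rcfType) := NormedModule.copy R[i] R[i]^o.

(* p is analytic in the unit disk D with Taylor coefficients c:
   for every z in D, the power series sum_k c_k z^k converges to p z. *)
Definition taylor_in_disk (R : realType) (c : nat -> R[i]) (p : R[i] -> R[i]) :=
  forall z : R[i], `|z| < 1 ->
    (fun n => \sum_(0 <= k < n) c k * z ^+ k) @ \oo --> p z.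

Definition r0 (R : realType) (b M alpha : R) : R :=
  2 * (1 - alpha) /
  (1 - alpha + 2 * b
   + Num.sqrt ((1 - alpha + 2 * b) ^+ 2 + 8 * (1 - alpha) * (M - b))).

Definition p0 (R : realType) (b M : R) (z : R[i]) : R[i] :=
  1 - (2 * b)%:C * z - (2 * M)%:C * (z ^+ 2 / (1 - z)).

Definition c0 (R : realType) (b M : R) (n : nat) : R[i] :=
  if n == 0%N then 1 else if n == 1%N then - (2 * b)%:C else - (2 * M)%:C.

(** If [|z| = t < 1], the coefficient bounds give
    [|p z - 1| <= 2 b t + 2 M (t^2 + t^3 + ...) = 2 b t + 2 M t^2 / (1 - t)].
    This majorant is increasing on [[0, 1)], and clearing the denominator [1 - t]
    turns [majorant t = 1 - alpha] into the quadratic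
    [2 (M - b) t^2 + (1 - alpha + 2 b) t = 1 - alpha], whose root in rationalized
    form is [r0].  Since [Re (1 - w) <= |1 - w|], the bound on [|p z - 1|] also
    gives [Re (p z) > alpha] inside the disk.  The extremal function [p0] has
    every coefficient bound attained with negative sign, so that
    [p0 t = 1 - majorant t] for real [t]. *)

From HB Require Import structures.
From mathcomp Require Import all_boot all_order all_algebra.
From mathcomp Require Import complex.
From mathcomp Require Import all_classical all_reals all_analysis.
From mathcomp Require Import ring lra.
Import Order.TTheory GRing.Theory Num.Theory Normc.
Set Implicit Arguments. Unset Strict Implicit.
Local Open Scope ring_scope.
Local Open Scope complex_scope.
Local Open Scope classical_set_scope.

Lemma sum_expr_mul1B (R : pzRingType) (x : R) (m n : nat) : (m <= n)%N ->
  (\sum_(m <= k < n) x ^+ k) * (1 - x) = x ^+ m - x ^+ n.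
Proof.
move=> le_mn; rewrite mulr_suml -[RHS]opprB -(telescope_sumr (GRing.exp x) le_mn).
by rewrite -sumrN; apply: eq_bigr => k _; rewrite mulrBr mulr1 -exprSr opprB.
Qed.

Lemma sum_expr_le (R : realFieldType) (t : R) (m n : nat) : 0 <= t -> t < 1 ->
  \sum_(m <= k < n) t ^+ k <= t ^+ m / (1 - t).
Proof.
move=> t_ge0 t_lt1; rewrite ler_pdivlMr ?subr_gt0 //.
have [le_mn|lt_nm] := leqP m n.
  by rewrite sum_expr_mul1B // lerBlDr lerDl exprn_ge0.
by rewrite big_geq ?(ltnW lt_nm) // mul0r exprn_ge0.
Qed.

Lemma quadratic_root_rationalized (R : rcfType) (A B C r : R) :
  C != 0 -> 0 <= B ^+ 2 + 4 * A * C ->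
  r * (B + Num.sqrt (B ^+ 2 + 4 * A * C)) = 2 * C -> A * r ^+ 2 + B * r = C.
Proof.
move=> C_neq0 D_ge0; have := sqr_sqrtr D_ge0.
move: (Num.sqrt _) => s s2 rs.
have /(congr1 (fun x => x ^+ 2)) : r * s = 2 * C - r * B by rewrite -rs; ring.
rewrite exprMn s2 => /eqP; rewrite -subr_eq0.
have -> : r ^+ 2 * (B ^+ 2 + 4 * A * C) - (2 * C - r * B) ^+ 2
  = (4 * C) * (A * r ^+ 2 + B * r - C) by ring.
by rewrite mulf_eq0 mulf_eq0 (negPf C_neq0) pnatr_eq0 /= subr_eq0 => /eqP.
Qed.

Definition majorant (R : realType) (b M t : R) : R :=
  2 * b * t + 2 * M * (t ^+ 2 / (1 - t)).

Lemma ltr_sqr_div1B (R : realFieldType) (s t : R) : 0 <= s -> s < t -> t < 1 ->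
  s ^+ 2 / (1 - s) < t ^+ 2 / (1 - t).
Proof.
move=> s_ge0 lt_st t_lt1.
rewrite ltr_pdivrMr ?subr_gt0 ?(lt_trans lt_st) // mulrAC.
rewrite ltr_pdivlMr ?subr_gt0 //.
have : s ^+ 2 < t ^+ 2 by rewrite ltr_sqr ?nnegrE //; lra.
nra.
Qed.

Section MajorantMonotone.
Variables (R : realType) (b M : R).
Hypotheses (b_ge0 : 0 <= b) (M_gt0 : 0 < M).

Lemma majorant_lt (s t : R) : 0 <= s -> s < t -> t < 1 ->
  majorant b M s < majorant b M t.
Proof.
move=> s_ge0 lt_st t_lt1; rewrite /majorant.
have := ltr_sqr_div1B s_ge0 lt_st t_lt1.
rewrite -(ltr_pM2l (_ : 0 < 2 * M)) ?mulr_gt0 // => lt_sq.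
have : 2 * b * s <= 2 * b * t by rewrite ler_wpM2l ?mulr_ge0 // ltW.
lra.
Qed.

Lemma majorant_le (s t : R) : 0 <= s -> s <= t -> t < 1 ->
  majorant b M s <= majorant b M t.
Proof.
move=> s_ge0; rewrite le_eqVlt => /orP[/eqP -> //|lt_st t_lt1].
exact/ltW/majorant_lt.
Qed.

End MajorantMonotone.

Section Radius.
Variables (R : realType) (b M alpha : R).
Hypotheses (M_gt0 : 0 < M) (alpha_lt1 : alpha < 1).

Let a := 1 - alpha.
Let D := (a + 2 * b) ^+ 2 + 8 * a * (M - b).

Let a_gt0 : 0 < a. Proof. by rewrite subr_gt0. Qed.

Let discrE : D = (a - 2 * b) ^+ 2 + 8 * a * M.
Proof. by rewrite /D; ring. Qed.

Let sqrt_discr_gt : a - 2 * b < Num.sqrt D.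
Proof.
rewrite discrE; apply: (le_lt_trans (ler_norm _)); rewrite -sqrtr_sqr ltr_sqrt.
  by rewrite ltrDl !mulr_gt0.
by rewrite ltr_pwDr ?sqr_ge0 // !mulr_gt0.
Qed.

Let denom_gt0 : 0 < a + 2 * b + Num.sqrt D.
Proof. by have := sqrt_discr_gt; have := a_gt0; lra. Qed.

Lemma r0_lt1 : r0 b M alpha < 1.
Proof.
by rewrite /r0 -/a -/D ltr_pdivrMr // mul1r; have := sqrt_discr_gt; lra.
Qed.

Lemma majorant_r0 : majorant b M (r0 b M alpha) = 1 - alpha.
Proof.
have quad : 2 * (M - b) * r0 b M alpha ^+ 2 + (a + 2 * b) * r0 b M alpha = a.
  have DE : (a + 2 * b) ^+ 2 + 4 * (2 * (M - b)) * a = D by rewrite /D; ring.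
  apply: quadratic_root_rationalized; rewrite ?DE ?lt0r_neq0 //.
    by rewrite discrE addr_ge0 ?sqr_ge0 // !mulr_ge0 // ltW.
  by rewrite /r0 -/a -/D divfK ?lt0r_neq0.
have r_neq1 : 1 - r0 b M alpha != 0 by rewrite subr_eq0 gt_eqF ?r0_lt1.
apply: (mulIf r_neq1); rewrite /majorant mulrDl -(mulrA (2 * M)) divfK //.
by move: quad; rewrite /a; lra.
Qed.

End Radius.

Lemma Re_le_normc (R : rcfType) (w : R[i]) : complex.Re w <= normc w.
Proof.
case: w => x y /=; apply: (le_trans (ler_norm x)).
by rewrite -sqrtr_sqr ler_wsqrtr // lerDl sqr_ge0.
Qed.

Lemma normc_le_of_cvg (R : realType) (u : nat -> R[i]) (l : R[i]) (e : R) :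
  u @ \oo --> l -> (\forall n \near \oo, normc (u n) <= e) -> normc l <= e.
Proof.
move=> ul u_le; apply/ler_addgt0Pr => eps eps_gt0.
near \oo => n.
have : normc (l - u n) < eps.
  by rewrite -ltcR; near: n; move/cvgrPdist_lt : ul; apply; rewrite ltcR.
have := le_normcD (l - u n) (u n); rewrite subrK.
have : normc (u n) <= e by near: n.
lra.
Unshelve. all: by end_near.
Qed.

Lemma cvg0_normc_le (R : realType) (u : nat -> R[i]) (v : nat -> R) :
  v @ \oo --> 0 -> (\forall n \near \oo, normc (u n) <= v n) -> u @ \oo --> 0.
Proof.
move=> v0 u_le; apply/cvgr0Pnorm_lt => eps eps_gt0.
have epsE : eps = (complex.Re eps)%:C by rewrite RRe_real // gtr0_real.
have Re_eps_gt0 : 0 < complex.Re eps by rewrite -ltcR -epsE.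
move/cvgr0Pnorm_lt : v0 => /(_ _ Re_eps_gt0) v_lt.
near=> n; rewrite epsE ltcR.
apply: (le_lt_trans (_ : normc (u n) <= v n)); first by near: n.
by apply: le_lt_trans (ler_norm _) _; near: n.
Unshelve. all: by end_near.
Qed.

Lemma normC_normr (R : rcfType) (w : R[i]) : (normc w)%:C = `|w|.
Proof. by []. Qed.

Lemma normcX (R : rcfType) (w : R[i]) (n : nat) : normc (w ^+ n) = normc w ^+ n.
Proof. by apply: complexI; rewrite rmorphXn !normC_normr normrX. Qed.

Lemma normc_ge0 (R : rcfType) (w : R[i]) : 0 <= normc w.
Proof. by rewrite -ler0c normC_normr. Qed.

Section TaylorBound.
Variables (R : realType) (b M : R) (c : nat -> R[i]).
Hypotheses (M_ge0 : 0 <= M) (c0_eq1 : c 0%N = 1) (normc_c1 : normc (c 1%N) = 2 * b)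
  (normc_cn : forall n, (2 <= n)%N -> normc (c n) <= 2 * M).

Lemma normc_partial_sum_sub1_le (z : R[i]) (n : nat) :
  normc z < 1 -> (2 <= n)%N ->
  normc (\sum_(0 <= k < n) c k * z ^+ k - 1) <= majorant b M (normc z).
Proof.
move=> z_lt1 n_ge2; have t_ge0 := normc_ge0 z.
rewrite big_ltn ?(ltn_trans _ n_ge2) // big_ltn // c0_eq1 expr0 mulr1.
rewrite [1 + _]addrC addrK; apply: le_trans (le_normcD _ _) _.
have tail : normc (\sum_(2 <= k < n) c k * z ^+ k) <=
    2 * M * \sum_(2 <= k < n) normc z ^+ k.
  rewrite -lecR normC_normr mulr_sumr rmorph_sum.
  apply: le_trans (ler_norm_sum _ _ _) _.
  apply: ler_sum_nat => k /andP[k_ge2 _].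
  rewrite rmorphM rmorphXn normrM normrX ler_wpM2r ?exprn_ge0 //.
  by rewrite lecR normc_cn.
rewrite normcM expr1 normc_c1 /majorant lerD2l.
apply: le_trans tail _; rewrite ler_wpM2l ?mulr_ge0 //.
exact: sum_expr_le.
Qed.

Lemma normc_sub1_le_majorant (p : R[i] -> R[i]) : taylor_in_disk c p ->
  forall z, normc z < 1 -> normc (p z - 1) <= majorant b M (normc z).
Proof.
move=> taylor_p z z_lt1.
apply: (normc_le_of_cvg (u := fun n => \sum_(0 <= k < n) c k * z ^+ k - 1)).
  have z_in_disk : `|z| < 1 by rewrite -normC_normr ltcR.
  by apply: cvgB (cvg_cst _); [typeclasses eauto | exact: taylor_p | typeclasses eauto].
near=> n; apply: normc_partial_sum_sub1_le => //.
by near: n; exact: nbhs_infty_ge.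
Unshelve. all: by end_near.
Qed.

End TaylorBound.

Section Extremal.
Variables (R : realType) (b M : R).

Lemma p0_real (t : R) : p0 b M t%:C = (1 - majorant b M t)%:C.
Proof.
by rewrite /p0 /majorant !(rmorphB, rmorphD, rmorphM, rmorph1, fmorphV, rmorphXn) opprD addrA.
Qed.

Lemma c0_partial_sum (z : R[i]) (n : nat) : z != 1 -> (2 <= n)%N ->
  \sum_(0 <= k < n) c0 b M k * z ^+ k = p0 b M z + (2 * M)%:C * (z ^+ n / (1 - z)).
Proof.
move=> z_neq1 n_ge2; have z1_neq0 : 1 - z != 0 by rewrite subr_eq0 eq_sym.
rewrite big_ltn ?(ltn_trans _ n_ge2) // big_ltn // /c0 /= expr0 mulr1 expr1.
have -> : \sum_(2 <= k < n) c0 b M k * z ^+ k = - (2 * M)%:C * \sum_(2 <= k < n) z ^+ k.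
  rewrite mulr_sumr; apply: eq_big_nat => k /andP[k_ge2 _].
  by rewrite /c0 (gtn_eqF (ltnW k_ge2)) (gtn_eqF k_ge2).
rewrite -[\sum_(2 <= k < n) _](mulfK z1_neq0) sum_expr_mul1B ?(ltnW n_ge2) //.
by rewrite /p0; field.
Qed.

Lemma taylor_in_disk_p0 : taylor_in_disk (c0 b M) (p0 b M).
Proof.
move=> z z_in_disk; have z_lt1 : normc z < 1 by rewrite -ltcR normC_normr.
have z_neq1 : z != 1 by apply: contraTneq z_lt1 => ->; rewrite normc1 ltxx.
pose w n := (2 * M)%:C * (z ^+ n / (1 - z)).
have w_cvg0 : w @ \oo --> 0.
  pose K := normc (2 * M)%:C / normc (1 - z).
  apply: (cvg0_normc_le (v := fun n => K * normc z ^+ n)).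
    rewrite -(mulr0 K); apply: cvgMr.
    by apply: cvg_expr; rewrite ger0_norm ?normc_ge0.
  by near=> n; rewrite /w /K !normcM normcV normcX mulrA mulrAC.
rewrite -[p0 b M z]addr0.
apply: (@cvg_trans _ ((fun n => p0 b M z + w n) @ \oo)).
  apply: near_eq_cvg; near=> n; rewrite c0_partial_sum //.
  by near: n; exact: nbhs_infty_ge.
by apply: cvgD w_cvg0; exact: cvg_cst.
Unshelve. all: by end_near.
Qed.

End Extremal.

Theorem theorem4p1 (R : realType) (b M alpha : R) (c : nat -> R[i])
    (p : R[i] -> R[i]) :
  0 <= b -> 0 < M -> 0 <= alpha -> alpha < 1 ->
  c 0%N = 1 ->
  `|c 1%N| = (2 * b)%:C ->
  (forall n : nat, (2 <= n)%N -> `|c n| <= (2 * M)%:C) ->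
  taylor_in_disk c p ->
  (forall z : R[i], `|z| <= (r0 b M alpha)%:C -> `|p z - 1| <= (1 - alpha)%:C) /\
  (forall z : R[i], `|z| < (r0 b M alpha)%:C -> alpha < complex.Re (p z)) /\
  (c0 b M 0%N = 1 /\
   `|c0 b M 1%N| = (2 * b)%:C /\
   (forall n : nat, (2 <= n)%N -> `|c0 b M n| <= (2 * M)%:C) /\
   taylor_in_disk (c0 b M) (p0 b M) /\
   p0 b M (r0 b M alpha)%:C = alpha%:C /\
   `|p0 b M (r0 b M alpha)%:C - 1| = (1 - alpha)%:C).
Proof.
move=> b_ge0 M_gt0 _ alpha_lt1 c0_eq1 c1_norm cn_norm taylor_p.
have normc_c1 : normc (c 1%N) = 2 * b by apply: complexI.
have normc_cn n : (2 <= n)%N -> normc (c n) <= 2 * M.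
  by rewrite -lecR; exact: cn_norm.
have bound := normc_sub1_le_majorant (ltW M_gt0) c0_eq1 normc_c1 normc_cn taylor_p.
have r_lt1 := r0_lt1 b M_gt0 alpha_lt1.
have majorant_r := majorant_r0 b M_gt0 alpha_lt1.
have p0_r0 : p0 b M (r0 b M alpha)%:C = alpha%:C.
  by rewrite p0_real majorant_r opprB addrC subrK.
split.
  move=> z; rewrite -!normC_normr !lecR => z_le_r0.
  apply: le_trans (bound z (le_lt_trans z_le_r0 r_lt1)) _.
  by rewrite -majorant_r majorant_le // normc_ge0.
split.
  move=> z; rewrite -normC_normr ltcR => z_lt_r0.
  have := bound z (lt_trans z_lt_r0 r_lt1).
  have := majorant_lt b_ge0 M_gt0 (normc_ge0 z) z_lt_r0 r_lt1.
  have := Re_le_normc (1 - p z).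
  by rewrite -normcN opprB raddfB /= majorant_r; lra.
have c0_norm n : (2 <= n)%N -> `|c0 b M n| = (2 * M)%:C.
  case: n => [|[|n]] // _.
  by rewrite /c0 /= normrN ger0_norm // ler0c mulr_ge0 // ltW.
split; first by [].
split; first by rewrite /c0 /= normrN ger0_norm // ler0c mulr_ge0.
split; first by move=> n /c0_norm ->.
split; first exact: taylor_in_disk_p0.
split; first exact: p0_r0.
rewrite p0_r0 -normrN opprB -[1]/(1%:C) -rmorphB.
by rewrite ger0_norm // ler0c subr_ge0 ltW.
Qed.
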